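(* Let $\Omega\subset\mathbb{R}^{n+1}$ be a compact convex body with $C^1$ boundary containing $0$ in its interior. Let $\Theta\in[0,1)$, let $r_\Theta>0$ satisfy $\omega_\Omega(r_\Theta)<\sqrt{2-2\Theta}$, and let $\delta>0$. Assume $u$ is a $c$-convex function whose Lipschitz constant $L_u>0$ with respect to $d_{\partial\Omega}$ satisfies $$L_u<\frac{\delta\,r_\Theta}{2C_{\partial\Omega}}.$$ Then for every $X\in\partial\Omega$, $\partial_c^\Omega u(X)\subset B^{n+1}_{\delta r_\Theta}(X)$.
   Context: $c(X,Y)=\frac{|X-Y|^2}{2}$; $R_\Omega>0$ with $\Omega\Subset B^{n+1}_{R_\Omega}(0)$; $u$ is $c$-convex if $u=v^c\not\equiv\infty$ where $v^c(\bar X):=\sup_{X\in B^{n+1}_{R_\Omega}(0)}(-c(X,\bar X)-v(X))$. $\partial_c^\Omega u(X):=\{\bar X\in\partial\Omega\mid u(Y)\ge-c(Y,\bar X)+c(X,\bar X)+u(X)\ \forall Y\in\partial\Omega\}$. $\omega_\Omega(r):=\sup\{|\mathcal{N}_\Omega(X_1)-\mathcal{N}_\Omega(X_2)|:X_i\in\partial\Omega,|X_1-X_2|<r\}$ with $\mathcal{N}_\Omega$ the outward unit normal. $d_{\partial\Omega}(X_1,X_2):=\inf\int_0^1|\dot\sigma(t)|dt$ over $C^1$ curves $\sigma$ in $\partial\Omega$ from $X_1$ to $X_2$, and $C_{\partial\Omega}\ge1$ is a constant with $|X_1-X_2|\le d_{\partial\Omega}(X_1,X_2)\le C_{\partial\Omega}|X_1-X_2|$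 for all $X_1,X_2\in\partial\Omega$. *)

(* R : realType; R^{n+1} = 'rV[R]_(n.+1) *)
From HB Require Import structures.
From mathcomp Require Import all_boot all_order all_algebra.
From mathcomp Require Import all_classical all_reals all_analysis.
Set Implicit Arguments. Unset Strict Implicit. Unset Printing Implicit Defensive.
Import Order.TTheory GRing.Theory Num.Theory.
Import numFieldNormedType.Exports.
Local Open Scope classical_set_scope.
Local Open Scope ring_scope.

Notation vec R n := 'rV[R]_(n.+1) (only parsing).

Section Defs.
Variables (R : realType) (n : nat).

Local Notation vec := 'rV[R]_(n.+1).

(* Euclidean norm (the library norm on matrices is the max norm) *)
Definition enorm (x : vec) : R := Num.sqrt (\sum_i (x ord0 i) ^+ 2).

Definition cost (X Y : vec) : R := (enorm (X - Y)) ^+ 2 / 2.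

Definition eball (X : vec) (r : R) : set vec := [set Y | enorm (Y - X) < r].

Definition bdry (A : set vec) : set vec := closure A `\` interior A.

(* convexity: the library's convex_set (analysis/convex.v) is used *)

Definition ebasis (i : 'I_n.+1) : vec := delta_mx 0 i.

Definition grad (f : vec -> R) (x : vec) : vec := \row_i ('D_(ebasis i) f x).

Definition local_defining_function (A : set vec) (X : vec) (U : set vec)
    (rho : vec -> R) : Prop :=
  open U /\ U X /\
  (forall Y, U Y -> forall i, derivable rho Y (ebasis i)) /\
  (forall i, {within U, continuous (fun Y => 'D_(ebasis i) rho Y)}) /\
  grad rho X != 0 /\
  (forall Y, U Y -> (A Y <-> rho Y <= 0)).

Definition C1_boundary (A : set vec) : Prop :=
  forall X, bdry A X -> exists U rho, local_defining_function A X U rho.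

Definition outward_unit_normal (A : set vec) (X v : vec) : Prop :=
  exists U rho, local_defining_function A X U rho /\
    v = (enorm (grad rho X))^-1 *: grad rho X.

Definition omega (A : set vec) (N : vec -> vec) (r : R) : R :=
  sup [set z | exists X1 X2, [/\ bdry A X1, bdry A X2, enorm (X1 - X2) < r &
                                  z = enorm (N X1 - N X2)]].

Definition C1_curve_in (S : set vec) (sigma : R -> vec) (X1 X2 : vec) : Prop :=
  [/\ (forall t, 0 <= t <= 1 -> derivable sigma t 1 /\ S (sigma t)),
      {within [set t : R | 0 <= t <= 1], continuous (fun t => 'D_1 sigma t)},
      sigma 0 = X1 & sigma 1 = X2].

Definition curve_length (sigma : R -> vec) : \bar R :=
  (\int[@lebesgue_measure R]_(t in [set t : R | (0 <= t <= 1)%R])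
     (enorm ('D_1 sigma t))%:E)%E.

Definition dist_bdry (A : set vec) (X1 X2 : vec) : \bar R :=
  ereal_inf [set curve_length sigma | sigma in
               [set sigma | C1_curve_in (bdry A) sigma X1 X2]].

Definition lip_const (A : set vec) (u : vec -> \bar R) : \bar R :=
  ereal_sup [set z | exists X1 X2, [/\ bdry A X1, bdry A X2, X1 != X2 &
     z = ((`|fine (u X1) - fine (u X2)|) / fine (dist_bdry A X1 X2))%:E]].

Definition ctrans (R0 : R) (v : vec -> \bar R) (Xb : vec) : \bar R :=
  ereal_sup [set ((- cost X Xb)%:E - v X)%E | X in eball 0 R0].

Definition c_convex (R0 : R) (u : vec -> \bar R) : Prop :=
  exists v, u = ctrans R0 v /\ exists X, u X != +oo%E.

Definition c_subdiff (A : set vec) (u : vec -> \bar R) (X : vec) : set vec :=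
  [set Xb | bdry A Xb /\ forall Y, bdry A Y ->
     ((- cost Y Xb + cost X Xb)%:E + u X <= u Y)%E].

End Defs.

From HB Require Import structures.
From mathcomp Require Import all_boot all_order all_algebra.
From mathcomp Require Import all_classical all_reals all_analysis.
From mathcomp Require Import lra ring.
Set Implicit Arguments. Unset Strict Implicit. Unset Printing Implicit Defensive.
Import Order.TTheory GRing.Theory Num.Theory.
Import numFieldNormedType.Exports.
Local Open Scope classical_set_scope.
Local Open Scope ring_scope.

(* Testing the c-subdifferential inequality at Y = Xb gives
   |X - Xb|^2 / 2 <= u(Xb) - u(X) <= L_u d(X, Xb) <= L_u C |X - Xb|,
   hence |X - Xb| < 2 C L_u < delta r_Theta.  Only the comparison between
   d and the chordal distance enters; the geometric hypotheses on Om do not. *)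

Section EuclideanNorm.
Variables (R : realType) (n : nat).

Lemma enorm0 : enorm (0 : vec R n) = 0.
Proof.
rewrite /enorm (eq_bigr (fun _ => 0)); first by rewrite big1 // sqrtr0.
by move=> i _; rewrite mxE expr0n.
Qed.

Lemma enormN (x : vec R n) : enorm (- x) = enorm x.
Proof. by rewrite /enorm; congr Num.sqrt; apply: eq_bigr => i _; rewrite mxE sqrrN. Qed.

Lemma enorm_ge0 (x : vec R n) : 0 <= enorm x.
Proof. exact: sqrtr_ge0. Qed.

End EuclideanNorm.

Section BoundaryFunctions.
Variables (R : realType) (n : nat) (A : set (vec R n)) (u : vec R n -> \bar R).

Lemma c_subdiff_cost_le X Xb :
  u X \is a fin_num -> u Xb \is a fin_num -> c_subdiff A u X Xb ->
  cost X Xb <= fine (u Xb) - fine (u X).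
Proof.
move=> uX uXb [bXb /(_ Xb bXb)].
rewrite {1}/cost subrr enorm0 expr0n /= mul0r oppr0 add0r.
by rewrite -(fineK uX) -(fineK uXb) -EFinD lee_fin lerBrDr.
Qed.

Lemma ltr_diff_lip_dist X1 X2 L d :
  bdry A X1 -> bdry A X2 -> X1 != X2 ->
  dist_bdry A X1 X2 = d%:E -> 0 < d -> (lip_const A u < L%:E)%E ->
  `|fine (u X1) - fine (u X2)| < L * d.
Proof.
move=> bX1 bX2 X12 dE d0 uL.
have quot_le : ((`|fine (u X1) - fine (u X2)| / d)%:E <= lip_const A u)%E.
  by apply: ereal_sup_ubound; exists X1, X2; rewrite dE.
by rewrite -ltr_pdivrMr // -lte_fin (le_lt_trans quot_le).
Qed.

Lemma ltr_diff_lip_chord X1 X2 L C :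
  bdry A X1 -> bdry A X2 -> 0 < enorm (X1 - X2) ->
  ((enorm (X1 - X2))%:E <= dist_bdry A X1 X2)%E ->
  (dist_bdry A X1 X2 <= (C * enorm (X1 - X2))%:E)%E ->
  (lip_const A u < L%:E)%E ->
  `|fine (u X1) - fine (u X2)| < L * (C * enorm (X1 - X2)).
Proof.
move=> bX1 bX2 e0; case dE: (dist_bdry A X1 X2) => [d| |] //=.
rewrite !lee_fin => ed dC uL.
have d0 : 0 < d := lt_le_trans e0 ed.
have X12 : X1 != X2 by apply: contraTneq e0 => ->; rewrite subrr enorm0 ltxx.
have Lu := ltr_diff_lip_dist bX1 bX2 X12 dE d0 uL.
have L0 : 0 <= L by rewrite -(pmulr_lge0 _ d0) (le_trans _ (ltW Lu)).
exact: lt_le_trans Lu (ler_wpM2l L0 dC).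
Qed.

End BoundaryFunctions.

Theorem proposition5p2 (R : realType) (n : nat) (Om : set (vec R n))
    (ROm : R) (N : vec R n -> vec R n) (C Theta rTheta delta : R)
    (u : vec R n -> \bar R) :
  compact Om -> convex_set Om -> C1_boundary Om -> interior Om 0 ->
  0 < ROm -> Om `<=` eball 0 ROm ->
  (forall X, bdry Om X -> outward_unit_normal Om X (N X)) ->
  1 <= C ->
  (forall X1 X2, bdry Om X1 -> bdry Om X2 ->
     ((enorm (X1 - X2))%:E <= dist_bdry Om X1 X2)%E /\
     (dist_bdry Om X1 X2 <= (C * enorm (X1 - X2))%:E)%E) ->
  0 <= Theta < 1 -> 0 < rTheta -> omega Om N rTheta < Num.sqrt (2 - 2 * Theta) ->
  0 < delta ->
  c_convex ROm u ->
  (forall X, bdry Om X -> u X \is a fin_num) ->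
  (0 < lip_const Om u)%E ->
  (lip_const Om u < (delta * rTheta / (2 * C))%:E)%E ->
  forall X, bdry Om X -> c_subdiff Om u X `<=` eball X (delta * rTheta).
Proof.
move=> _ _ _ _ _ _ _ C1 dist_equiv _ r0 _ d0 _ ufin _ uL X bX Xb XbX.
have bXb : bdry Om Xb by case: XbX.
rewrite /eball /= -opprB enormN.
set e := enorm (X - Xb).
have [e0|e_neq0] := eqVneq e 0; first by rewrite e0 mulr_gt0.
have e_gt0 : 0 < e by rewrite lt_neqAle eq_sym e_neq0 enorm_ge0.
have [ed dC] := dist_equiv X Xb bX bXb.
have cost_le := c_subdiff_cost_le (ufin X bX) (ufin Xb bXb) XbX.
have lip := ltr_diff_lip_chord bX bXb e_gt0 ed dC uL.
have halve : delta * rTheta / (2 * C) * (C * e) = delta * rTheta * e / 2.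
  by field; rewrite gt_eqF // (lt_le_trans ltr01 C1).
rewrite halve in lip.
rewrite /cost -/e expr2 in cost_le.
have := ler_norm (fine (u Xb) - fine (u X)); rewrite distrC => norm_ge.
by rewrite -(ltr_pM2r e_gt0); lra.
Qed.
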